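(* Let $(S,K,I)$ be an active split graph. If $\Phi(S)$ is connected, then $S$ is indecomposable.
   Context: All graphs are finite and simple. A split graph is a graph $S$ whose vertex set is a disjoint union $V(S)=K\,\dot\cup\,I$ with $K$ a clique and $I$ an independent set; $(K,I)$ is called a bipartition of $S$, and $(S,K,I)$ denotes $S$ together with this fixed bipartition. A 2-switch in a graph $G$ is performed on four distinct vertices $a,b,c,d$ with $ab,cd\in E(G)$ and $ac,bd\notin E(G)$: it deletes $ab,cd$ and adds $ac,bd$; $a,b,c,d$ are said to participate in it. A vertex is active in $G$ if it participates in some 2-switch on $G$, otherwise inactive; $act(G)$ is the set of active vertices, and $G$ is active if $act(G)=V(G)$. For a split graph $(S,K,I)$ and distinct $u,v\in I$, $\sigma_{uv}(S)$ is the number of induced subgraphs of $S$ isomorphic to $P_4$ containing both $u$ and $v$. The factor graph $\Phi(S)$ is the loopless multigraph with vertex set $I$ having exactly $\sigma_{uv}(S)$ parallel edges between $u$ and $v$. Graph notions (connected, complete, clique, etc.) applied to $\Phi(S)$ refer to its underlying simple graph, in which $u\sim v$ iff $\sigma_{uv}(S)\ge1$. Tyshkevich composition: for a split graph $(S,K,I)$ and a graph $G$ vertex-disjoint from $S$, $S\circ G$ is the graph with vertex set $V(S)\cup V(G)$ and edge set $E(S)\cup E(G)\cup\{xy: x\in K,\ y\in V(G)\}$. A graph $G$ is decomposable if $G=S\circ H$ for some split graph $S$ and graph $H$, each with at least one vertex; otherwise $G$ is indecomposable. *)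

From mathcomp Require Import all_boot.
Set Implicit Arguments. Unset Strict Implicit. Unset Printing Implicit Defensive.

Section Graphs.
Variable T : finType.

Definition simple_graph (adj : rel T) : Prop :=
  symmetric adj /\ irreflexive adj.

Definition is_clique (adj : rel T) (K : {set T}) : Prop :=
  forall x y, x \in K -> y \in K -> x != y -> adj x y.

Definition is_independent (adj : rel T) (I : {set T}) : Prop :=
  forall x y, x \in I -> y \in I -> ~~ adj x y.

Definition split_bipartition (adj : rel T) (A K I : {set T}) : Prop :=
  [/\ K :&: I = set0, K :|: I = A, is_clique adj K & is_independent adj I].

Definition two_switch (adj : rel T) (a b c d : T) : Prop :=
  [/\ uniq [:: a; b; c; d], adj a b, adj c d, ~~ adj a c & ~~ adj b d].

Definition active_vertex (adj : rel T) (v : T) : Prop :=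
  exists a b c d, two_switch adj a b c d /\ v \in [:: a; b; c; d].

Definition active_graph (adj : rel T) : Prop := forall v, active_vertex adj v.

Definition induces_P4 (adj : rel T) (W : {set T}) : bool :=
  [exists a, exists b, exists c, exists d,
     [&& uniq [:: a; b; c; d], W == [set a; b; c; d],
         adj a b, adj b c, adj c d,
         ~~ adj a c, ~~ adj a d & ~~ adj b d]].

Definition sigma (adj : rel T) (u v : T) : nat :=
  #|[set W : {set T} | induces_P4 adj W && (u \in W) && (v \in W)]|.

(* underlying simple graph of the factor graph Phi(S), on vertex set I *)
Definition factor_rel (adj : rel T) (I : {set T}) : rel T :=
  fun u v => [&& u \in I, v \in I, u != v & 0 < sigma adj u v].

Definition factor_connected (adj : rel T) (I : {set T}) : Prop :=
  forall u v, u \in I -> v \in I -> connect (factor_rel adj I) u v.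

(* G = S o H with V(S) = A, V(H) = B (both nonempty), S split with
   bipartition (K', I'): K' complete to B, I' anticomplete to B. *)
Definition decomposable (adj : rel T) : Prop :=
  exists (A B K I : {set T}),
    [/\ A != set0, B != set0, A :&: B = set0, A :|: B = setT &
        [/\ split_bipartition adj A K I,
        (forall x y, x \in K -> y \in B -> adj x y) &
        (forall x y, x \in I -> y \in B -> ~~ adj x y)]].

Definition indecomposable (adj : rel T) : Prop := ~ decomposable adj.

End Graphs.

From mathcomp Require Import all_boot.
Set Implicit Arguments. Unset Strict Implicit. Unset Printing Implicit Defensive.

(* Suppose S = S' o H with V(S') = A and V(H) = B.  Every vertex of B is
   adjacent to all of K' and to nothing in I', and this rules out an induced
   P4 meeting both A and B.  So every edge of the factor graph joins two
   vertices on the same side, and by connectivity all of I lies on one side.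
   On the other hand, in a split graph the four vertices of a 2-switch induce
   a P4 (split graphs have no induced 2K2 or C4), and every induced P4 has an
   end in I; since S is active, both A and B therefore contain a vertex of I. *)

Section InducedP4.
Variables (T : finType) (adj : rel T).

Definition path4 (a b c d : T) : bool :=
  [&& uniq [:: a; b; c; d], adj a b, adj b c, adj c d,
      ~~ adj a c, ~~ adj a d & ~~ adj b d].

Lemma induces_P4E (W : {set T}) :
  induces_P4 adj W -> exists a b c d, path4 a b c d /\ W = [set a; b; c; d].
Proof.
case/existsP=> a /existsP[b /existsP[c /existsP[d]]].
case/and5P=> abcd /eqP-> ab bc /and4P[cd nac nad nbd].
by exists a, b, c, d; rewrite /path4 abcd ab bc cd nac nad nbd.
Qed.

Lemma factor_rel_path4 (I : {set T}) (u v : T) :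
  factor_rel adj I u v ->
  exists a b c d, path4 a b c d /\ u \in [set a; b; c; d] /\ v \in [set a; b; c; d].
Proof.
case/and4P=> _ _ _ /card_gt0P[W]; rewrite inE => /andP[/andP[]].
by case/induces_P4E=> a [b [c [d [abcd ->]]]] uW vW; exists a, b, c, d.
Qed.

End InducedP4.

Section SplitGraph.
Variables (T : finType) (adj : rel T) (K I : {set T}).
Hypotheses (adj_sym : symmetric adj) (splitKI : split_bipartition adj setT K I).

Lemma split_cover (x : T) : x \in K \/ x \in I.
Proof.
case: splitKI => _ KUI _ _.
have : x \in K :|: I by rewrite KUI inE.
by rewrite inE => /orP.
Qed.

Lemma split_nonadj (x y : T) : x != y -> ~~ adj x y -> x \in I \/ y \in I.
Proof.
case: splitKI => _ _ cliqueK _ xy nxy.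
case: (split_cover x) => xK; last by left.
case: (split_cover y) => yK; last by right.
by rewrite (cliqueK _ _ xK yK xy) in nxy.
Qed.

Lemma split_adj (x y : T) : adj x y -> x \in K \/ y \in K.
Proof.
case: splitKI => _ _ _ indepI xy.
case: (split_cover x) => xI; first by left.
case: (split_cover y) => yI; first by right.
by move: (indepI _ _ xI yI); rewrite xy.
Qed.

Lemma split_free_2K2 (a b c d : T) :
  uniq [:: a; b; c; d] -> adj a b -> adj c d ->
  ~~ adj a c -> ~~ adj a d -> ~~ adj b c -> ~~ adj b d -> False.
Proof.
case: splitKI => _ _ cliqueK _.
rewrite /= !inE !negb_or => /and4P[/and3P[_ ac ad] /andP[bc bd] _ _] ab cd.
case: (split_adj ab) => [aK|bK]; case: (split_adj cd) => [cK|dK].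
- by rewrite (cliqueK _ _ aK cK ac).
- by rewrite (cliqueK _ _ aK dK ad).
- by rewrite (cliqueK _ _ bK cK bc).
- by rewrite (cliqueK _ _ bK dK bd).
Qed.

Lemma split_free_C4 (a b c d : T) :
  uniq [:: a; b; c; d] -> adj a b -> adj b c -> adj c d -> adj d a ->
  ~~ adj a c -> ~~ adj b d -> False.
Proof.
case: splitKI => _ _ _ indepI.
rewrite /= !inE !negb_or => /and4P[/and3P[_ ac _] /andP[_ bd] _ _] ab bc cd da nac nbd.
case: (split_nonadj ac nac) => [aI|cI]; case: (split_nonadj bd nbd) => [bI|dI].
- by move: (indepI _ _ aI bI); rewrite ab.
- by move: (indepI _ _ aI dI); rewrite adj_sym da.
- by move: (indepI _ _ cI bI); rewrite adj_sym bc.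
- by move: (indepI _ _ cI dI); rewrite cd.
Qed.

Lemma path4_end_indep (a b c d : T) : path4 adj a b c d -> a \in I \/ c \in I.
Proof.
case/and5P=> /= + _ _ _ /andP[nac _].
by rewrite !inE !negb_or => /and4P[/and3P[_ ac _] _ _ _]; apply: split_nonadj.
Qed.

Lemma two_switch_path4 (a b c d : T) :
  two_switch adj a b c d -> path4 adj a b c d \/ path4 adj b a d c.
Proof.
case=> abcd ab cd nac nbd.
have bdac : uniq [:: b; a; d; c].
  move: abcd; rewrite /= !inE !negb_or !(eq_sym b a) !(eq_sym d c).
  by case/and4P=> /and3P[-> -> ->] /andP[-> ->] ->.
case ad: (adj a d); case bc: (adj b c).
- by exfalso; apply: (split_free_C4 abcd ab bc cd); rewrite // adj_sym.
- by right; rewrite /path4 bdac (adj_sym b a) ab ad (adj_sym d c) cd nbd bc nac.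
- by left; rewrite /path4 abcd ab bc cd nac ad nbd.
- by exfalso; apply: (split_free_2K2 abcd ab cd nac); rewrite ?ad ?bc.
Qed.

Lemma active_vertex_path4 (v : T) :
  active_vertex adj v -> exists a b c d, path4 adj a b c d /\ v \in [set a; b; c; d].
Proof.
case=> a [b [c [d [/two_switch_path4 p4 vin]]]].
have vW : v \in [set a; b; c; d] by move: vin; rewrite !inE -!orbA.
case: p4 => p4; [exists a, b, c, d | exists b, a, d, c]; split => //.
by move: vW; rewrite !inE -!orbA => /or4P[]/eqP->; rewrite eqxx ?orbT.
Qed.

End SplitGraph.

(* The three kinds of vertices of S' o H (the clique and the independent set
   of S', and the vertices of H), and the adjacency forced between two
   distinct vertices of given kinds ([true] when it is unconstrained). *)
Inductive part := PartK | PartI | PartH.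

Definition in_H (p : part) : bool := if p is PartH then true else false.

Definition edge_allowed (p q : part) (e : bool) : bool :=
  match p, q with
  | PartK, PartK | PartK, PartH | PartH, PartK => e
  | PartI, PartI | PartI, PartH | PartH, PartI => ~~ e
  | _, _ => true
  end.

Lemma path4_parts_same_side (pa pb pc pd : part) :
  edge_allowed pa pb true -> edge_allowed pb pc true -> edge_allowed pc pd true ->
  edge_allowed pa pc false -> edge_allowed pa pd false -> edge_allowed pb pd false ->
  [/\ in_H pb = in_H pa, in_H pc = in_H pa & in_H pd = in_H pa].
Proof. by case: pa; case: pb; case: pc; case: pd. Qed.

Section Decomposition.
Variables (T : finType) (adj : rel T) (A B K I : {set T}).
Hypotheses (adj_sym : symmetric adj) (AB0 : A :&: B = set0) (ABT : A :|: B = setT).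
Hypotheses (splitA : split_bipartition adj A K I)
  (K_B : forall x y, x \in K -> y \in B -> adj x y)
  (I_B : forall x y, x \in I -> y \in B -> ~~ adj x y).

Definition part_of (x : T) : part :=
  if x \in K then PartK else if x \in I then PartI else PartH.

Lemma notin_B (x : T) : x \in A -> x \notin B.
Proof.
move=> xA; apply/negP=> xB.
have : x \in A :&: B by rewrite inE xA xB.
by rewrite AB0 inE.
Qed.

Lemma part_ofP (x : T) :
  [\/ part_of x = PartK /\ x \in K, part_of x = PartI /\ x \in I
    | part_of x = PartH /\ x \in B].
Proof.
case: splitA => _ KUI _ _; rewrite /part_of.
case: ifP => xK; first by apply: Or31.
case: ifP => xI; first by apply: Or32.
apply: Or33; split => //; have : x \in A :|: B by rewrite ABT.
by rewrite -KUI !inE xK xI.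
Qed.

Lemma in_H_part_of (x : T) : in_H (part_of x) = (x \in B).
Proof.
case: splitA => _ KUI _ _.
case: (part_ofP x) => [[-> xS] | [-> xS] | [-> //]]; apply/esym/negbTE/notin_B;
  by rewrite -KUI inE xS ?orbT.
Qed.

Lemma edge_allowed_part_of (x y : T) :
  x != y -> edge_allowed (part_of x) (part_of y) (adj x y).
Proof.
case: splitA => _ _ cliqueK indepI xy.
case: (part_ofP x) => [[-> xP] | [-> xP] | [-> xP]];
case: (part_ofP y) => [[-> yP] | [-> yP] | [-> yP]] //=.
- exact: cliqueK.
- exact: K_B.
- exact: indepI.
- exact: I_B.
- by rewrite adj_sym K_B.
- by rewrite adj_sym I_B.
Qed.

Lemma path4_same_side (a b c d : T) :
  path4 adj a b c d -> forall x, x \in [set a; b; c; d] -> (x \in B) = (a \in B).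
Proof.
case/and5P=> /= abcd ab bc cd /and3P[nac nad nbd] x.
move: abcd; rewrite !inE !negb_or => /and4P[/and3P[a_b a_c a_d] /andP[b_c b_d] c_d _].
move: (edge_allowed_part_of a_b) (edge_allowed_part_of b_c) (edge_allowed_part_of c_d)
  (edge_allowed_part_of a_c) (edge_allowed_part_of a_d) (edge_allowed_part_of b_d).
rewrite ab bc cd (negbTE nac) (negbTE nad) (negbTE nbd) => Eab Ebc Ecd Eac Ead Ebd.
have [] := path4_parts_same_side Eab Ebc Ecd Eac Ead Ebd.
rewrite !in_H_part_of => bB cB dB.
by rewrite -!orbA => /or4P[]/eqP->.
Qed.

Lemma factor_rel_same_side (J : {set T}) (u v : T) :
  factor_rel adj J u v -> (u \in B) = (v \in B).
Proof.
case/factor_rel_path4=> a [b [c [d [abcd [uW vW]]]]].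
by rewrite (path4_same_side abcd uW) (path4_same_side abcd vW).
Qed.

End Decomposition.

Theorem theorem2p6 (T : finType) (adj : rel T) (K I : {set T}) :
  simple_graph adj ->
  split_bipartition adj setT K I ->
  active_graph adj ->
  factor_connected adj I ->
  indecomposable adj.
Proof.
move=> [adj_sym _] splitKI active connI [A [B [K' [I' [An0 Bn0 AB0 ABT [splitA K_B I_B]]]]]].
have side := path4_same_side adj_sym AB0 ABT splitA K_B I_B.
have indep_same_side v : exists2 u, u \in I & (u \in B) = (v \in B).
  have [a [b [c [d [abcd vW]]]]] := active_vertex_path4 adj_sym splitKI (active v).
  rewrite (side _ _ _ _ abcd _ vW).
  case: (path4_end_indep splitKI abcd) => [aI | cI]; first by exists a.
  by exists c; rewrite // (side _ _ _ _ abcd) // !inE eqxx !orbT.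
have [v vB] := set0Pn _ Bn0; have [w wA] := set0Pn _ An0.
have [u uI uv] := indep_same_side v; have [u' u'I u'w] := indep_same_side w.
have factor_side := factor_rel_same_side adj_sym AB0 ABT splitA K_B I_B (J := I).
have := closed_connect factor_side (connI _ _ u'I uI).
by rewrite u'w uv vB (negbTE (notin_B AB0 wA)).
Qed.
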